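(* Let $P$ be a poset, let $\alpha\ge2$ be a cardinal, and let $\mathcal{U}$ be a join-specification for $P$ with $\mathcal{U}\subseteq\mathcal{U}_\alpha\subseteq\mathcal{U}^+$. Suppose that for all $p\in P$ and $T\in\mathcal{U}$, whenever $p\wedge\bigvee T$ is defined in $P$, the join $\bigvee_{t\in T}(p\wedge t)$ is also defined in $P$ and $p\wedge\bigvee T=\bigvee_{t\in T}(p\wedge t)$. Then $\mathcal{I}_{\mathcal{U}}$ is a frame.
   Context: A join-specification for $P$ is a set $\mathcal{U}\subseteq\wp(P)$ such that $\bigvee S$ exists in $P$ for every $S\in\mathcal{U}$ and $\{p\}\in\mathcal{U}$ for every $p\in P$. A $\mathcal{U}$-ideal is a down-closed $C\subseteq P$ with $\bigvee S\in C$ whenever $S\in\mathcal{U}$, $S\subseteq C$; $\mathcal{I}_{\mathcal{U}}$ is the complete lattice of $\mathcal{U}$-ideals under inclusion; $\Gamma_{\mathcal{U}}(S)$ is the smallest $\mathcal{U}$-ideal containing $S$. $\mathcal{U}^+=\{S\subseteq P:\bigvee S\text{ exists and }\bigvee S\in\Gamma_{\mathcal{U}}(S)\}$. $\mathcal{U}_\alpha=\{S\subseteq P:S\neq\emptyset,\ |S|<\alpha,\ \bigvee S\text{ exists in }P\}$. *)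

From mathcomp Require Import all_boot all_order.
Set Implicit Arguments. Unset Strict Implicit. Unset Printing Implicit Defensive.
Import Order.Theory.
Local Open Scope order_scope.

Definition pset (T : Type) := T -> Prop.
Definition psubset {T} (A B : pset T) := forall x, A x -> B x.

Section PosetDefs.
Context {d : Order.disp_t} {P : porderType d}.

Definition is_join (S : pset P) (x : P) :=
  (forall s, S s -> s <= x) /\ (forall u, (forall s, S s -> s <= u) -> x <= u).

Definition is_meet2 (p q x : P) :=
  (x <= p /\ x <= q) /\ (forall l, l <= p -> l <= q -> l <= x).

Definition join_spec (U : pset (pset P)) :=
  (forall S, U S -> exists x, is_join S x) /\
  (forall p : P, U (fun q => q = p)).

Definition U_ideal (U : pset (pset P)) (C : pset P) :=
  (forall x y, y <= x -> C x -> C y) /\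
  (forall S x, U S -> psubset S C -> is_join S x -> C x).

Definition Gamma (U : pset (pset P)) (S : pset P) : pset P :=
  fun x => forall C, U_ideal U C -> psubset S C -> C x.

Definition Uplus (U : pset (pset P)) : pset (pset P) :=
  fun S => exists x, is_join S x /\ Gamma U S x.

End PosetDefs.

(* cardinals are represented by types: |S| < |A| *)
Definition card_lt {T A : Type} (S : pset T) :=
  (exists f : {x | S x} -> A, injective f) /\
  ~ (exists g : A -> {x | S x}, injective g).

(* U_alpha, with alpha = |A| *)
Definition U_alpha {d : Order.disp_t} {P : porderType d} (A : Type)
    : pset (pset P) :=
  fun S => (exists s, S s) /\ @card_lt P A S /\ exists x, is_join S x.

Section Frames.
Context {T : Type}.
Definition is_lub_in (X : pset (pset T)) (F : pset (pset T)) (s : pset T) :=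
  X s /\ (forall D, F D -> psubset D s) /\
  (forall u, X u -> (forall D, F D -> psubset D u) -> psubset s u).
Definition is_glb_in (X : pset (pset T)) (F : pset (pset T)) (s : pset T) :=
  X s /\ (forall D, F D -> psubset s D) /\
  (forall u, X u -> (forall D, F D -> psubset u D) -> psubset u s).
Definition complete_lattice_in (X : pset (pset T)) :=
  forall F, psubset F X -> exists s, is_lub_in X F s.
Definition is_frame (X : pset (pset T)) :=
  complete_lattice_in X /\
  forall a F s m, X a -> psubset F X -> is_lub_in X F s ->
    is_glb_in X (fun E => E = a \/ E = s) m ->
    is_lub_in X
      (fun m' => exists D, F D /\ is_glb_in X (fun E => E = a \/ E = D) m') m.
End Frames.

Definition I_U {d : Order.disp_t} {P : porderType d} (U : pset (pset P))
  : pset (pset P) := U_ideal U.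

From mathcomp Require Import all_boot all_order.
From Stdlib Require Import ClassicalEpsilon ProofIrrelevance.
Set Implicit Arguments. Unset Strict Implicit.
Local Open Scope order_scope.
Import Order.Theory.

(* Joins in the lattice of U-ideals are generated ideals and meets are
   intersections.  Distributivity reduces to the fact that, for U-ideals a and u,
   the relative pseudocomplement  a => u = {x | every y <= x lying in a lies in u}
   is again a U-ideal: if every a /\ D (D in F) is below u, then every D, hence
   \/F, is below a => u, so a /\ \/F is below u.  For the closure of a => u
   under U-joins, take T in U with join j and y <= j in a.  The hypothesis gives
   y = y /\ j = \/_{t in T} (y /\ t); this family is an image of T, so it is
   nonempty of size < alpha, hence lies in U_alpha, contained in U^+, so y is in
   the ideal generated by the y /\ t, all of which lie in u. *)

Lemma card_lt_inj {T A : Type} (S S' : pset T) (k : {x | S' x} -> {x | S x}) :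
  injective k -> @card_lt T A S -> @card_lt T A S'.
Proof.
move=> kinj [[f finj] noinj]; split.
  by exists (f \o k) => z1 z2 /finj /kinj.
by move=> [g ginj]; apply: noinj; exists (k \o g) => a1 a2 /kinj /ginj.
Qed.

Lemma card_lt_functional_image {T A : Type} (S S' : pset T) (R : T -> T -> Prop) :
  (forall t x x', R t x -> R t x' -> x = x') ->
  (forall s', S' s' -> exists t, S t /\ R t s') ->
  @card_lt T A S -> @card_lt T A S'.
Proof.
move=> Rfun Rsurj.
pose pre z := constructive_indefinite_description _ (Rsurj _ (proj2_sig z)).
apply: (@card_lt_inj _ _ _ _ (fun z => exist S _ (proj1 (proj2_sig (pre z))))).
move=> [z1 p1] [z2 p2] /(f_equal sval) /= pre_eq.
have R1 := proj2 (proj2_sig (pre (exist _ z1 p1))).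
have R2 := proj2 (proj2_sig (pre (exist _ z2 p2))).
rewrite pre_eq in R1; have z12 : z1 = z2 by apply: Rfun R1 R2.
clear R1 R2 pre_eq; subst z2; by rewrite (proof_irrelevance _ p1 p2).
Qed.

Section Ideals.
Context {d : Order.disp_t} {P : porderType d}.

Lemma is_join_uniq (S : pset P) (x x' : P) : is_join S x -> is_join S x' -> x = x'.
Proof. by move=> [ub lub] [ub' lub']; apply: le_anti; rewrite lub // lub'. Qed.

Lemma is_meet2_uniq (p q x x' : P) : is_meet2 p q x -> is_meet2 p q x' -> x = x'.
Proof.
by move=> [[xp xq] glb] [[xp' xq'] glb']; apply: le_anti; rewrite glb // glb'.
Qed.

Lemma is_meet2_le (y x : P) : y <= x -> is_meet2 y x y.
Proof. by move=> yx; split=> // l. Qed.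

Variable U : pset (pset P).

Lemma Gamma_U_ideal (S : pset P) : U_ideal U (Gamma U S).
Proof.
split.
  move=> x y yx Gx C [downC joinC] SC.
  exact: downC yx (Gx C (conj downC joinC) SC).
move=> T x UT TG joinT C idealC SC; apply: idealC.2 UT _ joinT => t Tt.
exact: TG t Tt C idealC SC.
Qed.

Lemma Gamma_lub (F : pset (pset P)) :
  is_lub_in (I_U U) F (Gamma U (fun x => exists D, F D /\ D x)).
Proof.
split; first exact: Gamma_U_ideal.
split; first by move=> D FD x Dx C _ SC; apply: SC; exists D.
move=> u idealu ub x Gx; apply: (Gx u idealu) => y [D [FD Dy]]; exact: ub D FD y Dy.
Qed.

Lemma I_U_complete : complete_lattice_in (I_U U).
Proof. by move=> F _; eexists; apply: Gamma_lub. Qed.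

Lemma U_ideal_setI (C D : pset P) :
  U_ideal U C -> U_ideal U D -> U_ideal U (fun x => C x /\ D x).
Proof.
move=> [downC joinC] [downD joinD]; split.
  by move=> x y yx [Cx Dx]; split; [apply: downC yx Cx | apply: downD yx Dx].
move=> S x US SCD joinS; split.
  by apply: joinC US _ joinS => s /SCD [].
by apply: joinD US _ joinS => s /SCD [].
Qed.

Lemma setI_glb (C D : pset P) : I_U U C -> I_U U D ->
  is_glb_in (I_U U) (fun E => E = C \/ E = D) (fun x => C x /\ D x).
Proof.
move=> idealC idealD; split; first exact: U_ideal_setI.
split; first by move=> E [->|->] x [].
move=> v _ lb x vx.
by split; [apply: lb (or_introl _) x vx | apply: lb (or_intror _) x vx].
Qed.

Definition ideal_impl (a u : pset P) : pset P :=
  fun x => forall y, y <= x -> a y -> u y.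

Section Distributive.
Variable A : Type.
Hypothesis U_sub_alpha : psubset U (U_alpha A).
Hypothesis alpha_sub_plus : psubset (U_alpha A) (Uplus U).
Hypothesis meet_join_distr : forall (p : P) (T : pset P) (j m : P),
  U T -> is_join T j -> is_meet2 p j m ->
  (forall t, T t -> exists mt, is_meet2 p t mt) /\
  is_join (fun x => exists t, T t /\ is_meet2 p t x) m.

Lemma Gamma_meets_below_join (T : pset P) (j y : P) :
  U T -> is_join T j -> y <= j ->
  Gamma U (fun z => exists t, T t /\ is_meet2 y t z) y.
Proof.
move=> UT joinT yj.
have [meets_exist join_meets] := meet_join_distr UT joinT (is_meet2_le yj).
have [[t0 Tt0] [cardT _]] := U_sub_alpha UT.
have : U_alpha A (fun z => exists t, T t /\ is_meet2 y t z).
  split; first by have [mt meet_t0] := meets_exist t0 Tt0; exists mt, t0.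
  split; last by exists y.
  apply: (card_lt_functional_image (R := is_meet2 y)) cardT => // t; exact: is_meet2_uniq.
move=> /(alpha_sub_plus (x := _)) [y' [join' Gy']].
by rewrite -(is_join_uniq join_meets join') in Gy'.
Qed.

Lemma ideal_impl_U_ideal (a u : pset P) :
  (forall x y, y <= x -> a x -> a y) -> U_ideal U u -> U_ideal U (ideal_impl a u).
Proof.
move=> downa idealu; split.
  by move=> x y yx impl_x z zy; apply: impl_x; apply: le_trans zy yx.
move=> T j UT T_impl joinT y yj ay.
apply: (Gamma_meets_below_join UT joinT yj idealu) => z [t [Tt [[zy zt] _]]].
exact: (T_impl t Tt z zt (downa _ _ zy ay)).
Qed.

Lemma I_U_meet_distr (a : pset P) (F : pset (pset P)) (s m : pset P) :
  I_U U a -> psubset F (I_U U) -> is_lub_in (I_U U) F s ->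
  is_glb_in (I_U U) (fun E => E = a \/ E = s) m ->
  is_lub_in (I_U U)
    (fun m' => exists D, F D /\ is_glb_in (I_U U) (fun E => E = a \/ E = D) m') m.
Proof.
move=> ideala idealF [_ [s_ub s_lub]] [idealm [m_lb m_glb]].
have ma : psubset m a by apply: m_lb; left.
have ms : psubset m s by apply: m_lb; right.
split=> //; split.
  move=> m' [D [FD [idealm' [m'_lb _]]]]; apply: m_glb idealm' _ => E [->|->].
    by apply: m'_lb; left.
  by move=> x m'x; exact: (s_ub D FD x (m'_lb D (or_intror erefl) x m'x)).
move=> u idealu u_ub.
have s_impl : psubset s (ideal_impl a u).
  apply: s_lub; first by apply: ideal_impl_U_ideal ideala.1 idealu.
  move=> D FD x Dx y yx ay; apply: (u_ub (fun z => a z /\ D z)).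
    by exists D; split=> //; exact: setI_glb ideala (idealF D FD).
  by split=> //; exact: (idealF D FD).1 x y yx Dx.
by move=> x mx; exact: (s_impl x (ms x mx) x (lexx x) (ma x mx)).
Qed.

End Distributive.
End Ideals.

Theorem lemma3p13 (d : Order.disp_t) (P : porderType d) (A : Type)
  (U : pset (pset P)) :
  (exists a b : A, a <> b) ->
  join_spec U ->
  psubset U (U_alpha A) ->
  psubset (U_alpha A) (Uplus U) ->
  (forall (p : P) (T : pset P) (j m : P), U T -> is_join T j ->
     is_meet2 p j m ->
     (forall t, T t -> exists mt, is_meet2 p t mt) /\
     is_join (fun x => exists t, T t /\ is_meet2 p t x) m) ->
  is_frame (I_U U).
Proof.
move=> _ _ U_sub_alpha alpha_sub_plus meet_join_distr; split.
  exact: I_U_complete.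
exact: I_U_meet_distr U_sub_alpha alpha_sub_plus meet_join_distr.
Qed.
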